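(* For every state $\rho\in\mathsf{St}(S)$, $\mathsf A_w(\rho)\ge \dfrac{\mathsf A_r(\rho)}{d-1}$.
   Context: $S$ is a $d$-dimensional quantum system ($d\ge2$) with non-degenerate Hamiltonian $H=\sum_i E_i|i\rangle\langle i|$, $E_1<\dots<E_d$. $\mathsf{St}(S)$ is the set of density matrices; $\mathsf P(S)$ is the set of passive states, i.e. states $\sum_i p_i|i\rangle\langle i|$ with $p_1\ge\dots\ge p_d$. Activity weight: $\mathsf A_w(\rho)=\min\{t\ge0:\ \rho=t\sigma+(1-t)\tau,\ \sigma\in\mathsf{St}(S),\ \tau\in\mathsf P(S)\}$. Robustness of activity: $\mathsf A_r(\rho)=\min\{t\ge0:\ \exists\sigma\in\mathsf{St}(S),\ (\rho+t\sigma)/(1+t)\in\mathsf P(S)\}$. *)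

From HB Require Import structures.
From mathcomp Require Import all_boot all_order all_algebra.
From mathcomp Require Import classical_sets reals.
From mathcomp Require Import complex.
Set Implicit Arguments. Unset Strict Implicit. Unset Printing Implicit Defensive.
Import Order.TTheory GRing.Theory Num.Theory.
Local Open Scope ring_scope.
Local Open Scope classical_set_scope.
Local Open Scope complex_scope.

Section Defs.
Variables (R : realType) (d : nat).
Local Notation C := R[i].

Definition adj (A : 'M[C]_d) : 'M[C]_d := (map_mx Num.conj A)^T.

(* positive semidefinite (over C, this forces Hermitian) *)
Definition psd (A : 'M[C]_d) : Prop :=
  A = adj A /\
  forall v : 'cV[C]_d, 0 <= ((map_mx Num.conj v)^T *m A *m v) 0 0.

Definition is_state (A : 'M[C]_d) : Prop := psd A /\ \tr A = 1.

(* P(S): passive states for H = sum_i E_i |i><i| (standard basis = energy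
   eigenbasis): diagonal in the energy basis with populations non-increasing
   in energy. *)
Definition is_passive (E : 'I_d -> R) (A : 'M[C]_d) : Prop :=
  is_state A /\
  exists p : 'I_d -> R,
    A = diag_mx (\row_i ((p i)%:C)) /\
    (forall i j : 'I_d, E i <= E j -> p j <= p i).

Definition activity_weight (E : 'I_d -> R) (rho : 'M[C]_d) : R :=
  inf [set t : R | 0 <= t /\ exists sigma tau : 'M[C]_d,
         is_state sigma /\ is_passive E tau /\
         rho = (t%:C) *: sigma + ((1 - t)%:C) *: tau].

Definition activity_robustness (E : 'I_d -> R) (rho : 'M[C]_d) : R :=
  inf [set t : R | 0 <= t /\ exists sigma : 'M[C]_d,
         is_state sigma /\
         is_passive E (((1 + t)%:C)^-1 *: (rho + (t%:C) *: sigma))].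

End Defs.

From HB Require Import structures.
From mathcomp Require Import all_boot all_order all_algebra.
From mathcomp Require Import classical_sets reals.
From mathcomp Require Import complex.
From mathcomp Require Import ring.
Import Order.TTheory GRing.Theory Num.Theory.
Local Open Scope ring_scope.
Local Open Scope complex_scope.

(* Let rho = t sigma + (1 - t) tau with sigma a state, tau
   passive and 0 <= t <= 1.  Every state satisfies sigma <= (tr sigma) 1 = 1,
   so sigma' := (1 - sigma) / (d - 1) is again a state, and
     rho + (d - 1) t sigma' = t 1 + (1 - t) tau,
   whose normalisation is a convex combination of the (passive) maximally
   mixed state and tau, hence passive.  Thus A_r(rho) <= (d - 1) t.  Weights
   t > 1 are covered by the weight t = 1 (sigma = rho), and t = 1 witnesses
   that the weight set is non-empty; taking infima gives the theorem. *)

Section ActivityBound.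
Variables (R : realType) (d : nat).
Local Notation C := R[i].

Definition qf (A : 'M[C]_d) (v : 'cV[C]_d) : C :=
  ((map_mx Num.conj v)^T *m A *m v) 0 0.

Lemma conjR (x : R) : Num.conj (x%:C) = x%:C.
Proof. by apply: conj_Creal; rewrite complex_real. Qed.

Lemma natC (n : nat) : (n%:R : R)%:C = n%:R.
Proof. by rewrite rmorph_nat. Qed.

Lemma sum_kronecker (f : 'I_d -> C) i : \sum_l (l == i)%:R * f l = f i.
Proof.
rewrite (bigD1 i) //= eqxx mul1r big1 ?addr0 // => l /negbTE ->.
by rewrite mul0r.
Qed.

Lemma qfE A v : qf A v = \sum_j \sum_i Num.conj (v i 0) * A i j * v j 0.
Proof.
rewrite /qf !mxE; apply: eq_bigr => j _; rewrite !mxE mulr_suml.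
by apply: eq_bigr => i _; rewrite !mxE.
Qed.

Lemma qfD (A B : 'M[C]_d) v : qf (A + B) v = qf A v + qf B v.
Proof. by rewrite /qf mulmxDr mulmxDl mxE. Qed.

Lemma qfN (A : 'M[C]_d) v : qf (- A) v = - qf A v.
Proof. by rewrite /qf mulmxN mulNmx mxE. Qed.

Lemma qfZ a (A : 'M[C]_d) v : qf (a *: A) v = a * qf A v.
Proof. by rewrite /qf -scalemxAr -scalemxAl mxE. Qed.

Lemma qf1 v : qf 1%:M v = \sum_i Num.conj (v i 0) * v i 0.
Proof.
rewrite qfE; apply: eq_bigr => j _.
rewrite -(sum_kronecker (fun i => Num.conj (v i 0) * v j 0) j).
by apply: eq_bigr => i _; rewrite mxE; ring.
Qed.

(* Positivity of A on the vector conj(c j) e_i - conj(c i) e_j: a weighted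
   form of the non-negativity of the 2x2 principal minors of A. *)
Lemma psd_minor2 (A : 'M[C]_d) (c : 'I_d -> C) i j : psd A ->
  0 <= c j * Num.conj (c j) * A i i - Num.conj (c i) * A i j * c j
       - Num.conj (c j) * A j i * c i + c i * Num.conj (c i) * A j j.
Proof.
move=> [_ pos].
pose w := \col_k (Num.conj (c j) * (k == i)%:R - Num.conj (c i) * (k == j)%:R).
have := pos w; rewrite -/(qf A w) qfE.
have row_sum l : \sum_k Num.conj (w k 0) * A k l * w l 0
    = (c j * A i l - c i * A j l) * w l 0.
  transitivity (\sum_k ((k == i)%:R * (c j * A k l * w l 0)
                      - (k == j)%:R * (c i * A k l * w l 0))).
    apply: eq_bigr => k _.
    rewrite [w k 0]mxE rmorphB !rmorphM !rmorph_nat /= !conjCK; ring.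
  by rewrite sumrB !(sum_kronecker (fun k => _ * A k l * _)); ring.
under eq_bigr do rewrite row_sum.
have -> : \sum_l (c j * A i l - c i * A j l) * w l 0 =
   \sum_l ((l == i)%:R * ((c j * A i l - c i * A j l) * Num.conj (c j))
         - (l == j)%:R * ((c j * A i l - c i * A j l) * Num.conj (c i))).
  by apply: eq_bigr => l _; rewrite mxE; ring.
rewrite sumrB !(sum_kronecker (fun l => (c j * A i l - c i * A j l) * _)).
by congr (0 <= _); ring.
Qed.

(* The operator inequality A <= (tr A) 1 for positive semidefinite A,
   obtained by summing psd_minor2 over all pairs (i, j). *)
Lemma psd_le_trace (A : 'M[C]_d) v : psd A ->
  qf A v <= \tr A * \sum_i Num.conj (v i 0) * v i 0.
Proof.
move=> psdA; pose c i := v i 0.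
set N := \sum_i _.
have : 0 <= \sum_i \sum_j (c j * Num.conj (c j) * A i i
    - Num.conj (c i) * A i j * c j - Num.conj (c j) * A j i * c i
    + c i * Num.conj (c i) * A j j).
  by do 2![apply: sumr_ge0 => ? _]; apply: psd_minor2.
under eq_bigr => i _ do rewrite big_split !sumrB.
rewrite big_split !sumrB /=.
have -> : \sum_i \sum_j Num.conj (c j) * A j i * c i = qf A v by rewrite qfE.
have -> : \sum_i \sum_j Num.conj (c i) * A i j * c j = qf A v.
  by rewrite exchange_big qfE.
have -> : \sum_i \sum_j c j * Num.conj (c j) * A i i = \tr A * N.
  rewrite /mxtrace mulr_suml; apply: eq_bigr => i _.
  rewrite mulrC mulr_suml; apply: eq_bigr => j _; rewrite /c; ring.
have -> : \sum_i \sum_j c i * Num.conj (c i) * A j j = \tr A * N.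
  rewrite /mxtrace /N mulr_sumr; apply: eq_bigr => i _.
  rewrite -mulr_sumr /c; ring.
move=> sum_ge0; rewrite -subr_ge0.
have -> : \tr A * N - qf A v = (\tr A * N - qf A v - qf A v + \tr A * N) / 2.
  by field.
by rewrite divr_ge0 // ler0n.
Qed.

Lemma adjD (A B : 'M[C]_d) : adj (A + B) = adj A + adj B.
Proof. by apply/matrixP => i j; rewrite !mxE rmorphD. Qed.

Lemma adjN (A : 'M[C]_d) : adj (- A) = - adj A.
Proof. by apply/matrixP => i j; rewrite !mxE rmorphN. Qed.

Lemma adjZR (x : R) (A : 'M[C]_d) : adj (x%:C *: A) = x%:C *: adj A.
Proof. by apply/matrixP => i j; rewrite !mxE rmorphM /= conjR. Qed.

Lemma adj1 : adj (1%:M : 'M[C]_d) = 1%:M.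
Proof. by apply/matrixP => i j; rewrite !mxE rmorph_nat eq_sym. Qed.

Lemma psd_add (A B : 'M[C]_d) : psd A -> psd B -> psd (A + B).
Proof.
move=> [hA pA] [hB pB]; split; first by rewrite adjD -hA -hB.
by move=> v; rewrite -/(qf _ v) qfD addr_ge0 ?pA ?pB.
Qed.

Lemma psd_scale (x : R) (A : 'M[C]_d) : 0 <= x -> psd A -> psd (x%:C *: A).
Proof.
move=> hx [hA pA]; split; first by rewrite adjZR -hA.
by move=> v; rewrite -/(qf _ v) qfZ mulr_ge0 // ?lecR // pA.
Qed.

Lemma psd1 : psd (1%:M : 'M[C]_d).
Proof.
split=> [|v]; first by rewrite adj1.
rewrite -/(qf _ v) qf1; apply: sumr_ge0 => i _.
by rewrite mulrC mul_conjC_ge0.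
Qed.

Lemma psd_sub_state (S : 'M[C]_d) : is_state S -> psd (1%:M - S).
Proof.
move=> [psdS trS]; split; first by rewrite adjD adjN adj1 -(proj1 psdS).
move=> v; rewrite -/(qf _ v) qfD qfN qf1 subr_ge0.
by have := @psd_le_trace S v psdS; rewrite trS mul1r.
Qed.

Lemma complement_state (sigma : 'M[C]_d) : (2 <= d)%N -> is_state sigma ->
  is_state (((d%:R - 1)^-1)%:C *: (1%:M - sigma)).
Proof.
move=> d2 sig_state; have hd : 0 < d%:R - 1 :> R by rewrite subr_gt0 ltr1n.
split; first by apply: psd_scale; [rewrite invr_ge0 ltW | exact: psd_sub_state].
rewrite mxtraceZ raddfB /= mxtrace_scalar (proj2 sig_state).
have -> : (1 *+ d : C) - 1 = (d%:R - 1 : R)%:C.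
  by rewrite rmorphB rmorph_nat rmorph1.
by rewrite -rmorphM mulVf ?rmorph1 // gt_eqF.
Qed.

Lemma passive_comb E (tau : 'M[C]_d) (a b : R) :
  is_passive E tau -> 0 <= a -> 0 <= b -> a * d%:R + b = 1 ->
  is_passive E (a%:C *: 1%:M + b%:C *: tau).
Proof.
move=> [[ptau trtau] [q [htau hq]]] ha hb htr; split; first split.
- by apply: psd_add; apply: psd_scale => //; exact: psd1.
- rewrite mxtraceD !mxtraceZ mxtrace_scalar trtau mulr1.
  by rewrite -natC -rmorphM -rmorphD htr.
exists (fun i => a + b * q i); split.
  apply/matrixP => i j; rewrite htau !mxE rmorphD rmorphM /=.
  by case: (i == j); rewrite /= ?mulr1n ?mulr0n; ring.
by move=> i j /hq h; rewrite lerD2l ler_wpM2l.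
Qed.

Definition maxmixed : 'M[C]_d := ((d%:R : R)^-1)%:C *: 1%:M.

Lemma maxmixed_passive E : (0 < d)%N -> is_passive E maxmixed.
Proof.
move=> d_gt0; have hd : 0 < d%:R :> R by rewrite ltr0n.
split; first split.
- by apply: psd_scale; [rewrite invr_ge0 ltW | exact: psd1].
- by rewrite mxtraceZ mxtrace_scalar -natC -rmorphM mulVf ?gt_eqF.
exists (fun _ => d%:R^-1); split=> // .
by apply/matrixP => i j; rewrite !mxE mulr_natr.
Qed.

(* Core estimate: a decomposition rho = t sigma + (1 - t) tau with
   0 <= t <= 1 gives A_r(rho) <= (d - 1) t, the extra noise being the
   complement state of sigma with weight (d - 1) t. *)
Lemma robustness_le_weight E (rho sigma tau : 'M[C]_d) (t : R) :
  (2 <= d)%N -> 0 <= t -> t <= 1 -> is_state sigma -> is_passive E tau ->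
  rho = t%:C *: sigma + (1 - t)%:C *: tau ->
  activity_robustness E rho <= (d%:R - 1) * t.
Proof.
move=> d2 t0 t1 sig_state tau_pas hrho.
have hd : 0 < d%:R - 1 :> R by rewrite subr_gt0 ltr1n.
set s := 1 + (d%:R - 1) * t.
have hs : 0 < s.
  by apply: (lt_le_trans ltr01); rewrite lerDl mulr_ge0 // ltW.
apply: ge_inf; first by exists 0 => y [].
split; first by rewrite mulr_ge0 // ltW.
exists (((d%:R - 1)^-1)%:C *: (1%:M - sigma)); split.
  exact: complement_state.
have -> : (s%:C)^-1 *: (rho + ((d%:R - 1) * t)%:C *:
      (((d%:R - 1)^-1)%:C *: (1%:M - sigma))) =
    (t / s)%:C *: 1%:M + ((1 - t) / s)%:C *: tau.
  have dC0 : (d%:R - 1 : C) != 0.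
    have : (d%:R - 1 : R)%:C != 0 by rewrite fmorph_eq0 gt_eqF.
    by rewrite rmorphB rmorph_nat rmorph1.
  have sC0 : (1 + (d%:R - 1) * t%:C : C) != 0.
    have : s%:C != 0 by rewrite fmorph_eq0 gt_eqF.
    by rewrite rmorphD rmorphM rmorphB rmorph_nat rmorph1.
  apply/matrixP => i j; rewrite hrho !mxE /s.
  rewrite !(rmorphM, rmorphD, rmorphB, fmorphV, rmorph1, rmorph_nat) /=.
  by field; rewrite dC0 andbT.
apply: passive_comb => //.
- by rewrite divr_ge0 // ltW.
- by rewrite divr_ge0 ?subr_ge0 // ltW.
- by rewrite /s; field; rewrite gt_eqF.
Qed.

End ActivityBound.

Theorem mainTheorem10 (R : realType) (d : nat) (E : 'I_d -> R) (rho : 'M[R[i]]_d) :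
  (2 <= d)%N ->
  (forall i j : 'I_d, (i < j)%N -> E i < E j) ->
  is_state rho ->
  activity_robustness E rho / (d%:R - 1) <= activity_weight E rho.
Proof.
move=> d2 _ rho_state.
have hd : 0 < d%:R - 1 :> R by rewrite subr_gt0 ltr1n.
have mm_pas : is_passive E (maxmixed R d) by apply: maxmixed_passive; exact: ltnW.
have rho_split : rho = 1%:C *: rho + (1 - 1)%:C *: maxmixed R d.
  by rewrite subrr scale0r addr0 scale1r.
(* the trivial decomposition with weight 1 bounds the robustness by d - 1 *)
have rob_le_dm1 : activity_robustness E rho <= (d%:R - 1) * 1.
  exact: robustness_le_weight mm_pas rho_split.
apply: lb_le_inf; first by exists 1; split=> //; exists rho, (maxmixed R d).
move=> t [t0 [sigma [tau [sig_state [tau_pas hrho]]]]].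
rewrite ler_pdivrMr // mulrC.
have [t1|t_gt1] := leP t 1; first exact: robustness_le_weight hrho.
by apply: (le_trans rob_le_dm1); rewrite ler_wpM2l ?ltW.
Qed.
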